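(* Let $G$ be a residually finite group and let $A$ be a finite set. Suppose that $X \subset A^G$ is a strongly irreducible subshift of finite type containing a periodic configuration. Then $X$ is surjunctive and its automorphism group $\mathrm{Aut}(X)$ is residually finite. If in addition $G$ is countable, then $X$ admits a $G$-invariant Borel probability measure with full support.
   Context: $A^G=\{x\colon G\to A\}$ carries the prodiscrete topology and the $G$-shift action $(gx)(h)=x(g^{-1}h)$. A subshift is a closed $G$-invariant subset of $A^G$. A configuration is periodic if its $G$-orbit is finite. A subshift $X$ is of finite type if there are a finite $\Omega\subset G$ and $\mathcal P\subset A^\Omega$ with $X=\{x\in A^G:(gx)|_\Omega\in\mathcal P\ \forall g\in G\}$. $X$ is strongly irreducible if there is a finite $\Delta\subset G$ such that for all finite $\Omega_1,\Omega_2\subset G$ with $\Omega_1\Delta^{-1}\cap\Omega_2=\varnothing$ and all $x_1,x_2\in X$ there is $x\in X$ with $x|_{\Omega_1}=x_1|_{\Omega_1}$, $x|_{\Omega_2}=x_2|_{\Omega_2}$. A cellular automaton on $X$ is a continuous $G$-equivariant map $X\to X$; $X$ is surjunctive if every injective cellular automaton $X\to X$ is surjective; $\mathrm{Aut}(X)$ is the group of bijective cellular automata $X\to X$ under composition. A group is residually finite if the intersection of its finite-index subgroups is trivial. *)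

From HB Require Import structures.
From mathcomp Require Import all_boot all_order all_algebra.
From mathcomp Require Import monoid.
From mathcomp Require Import all_classical all_reals topology normedtype sequences measure.
Set Implicit Arguments. Unset Strict Implicit. Unset Printing Implicit Defensive.
Import Order.TTheory GRing.Theory Num.Theory.
Import numFieldNormedType.Exports.
Local Open Scope classical_set_scope.

(* A group is presented by a carrier set S inside a type T, with operation
   [mul] and unit [one].  [H] is a subgroup of S. *)
Definition subgroup_in {T : Type} (mul : T -> T -> T) (one : T) (S H : set T) :=
  [/\ H `<=` S, H one,
      (forall x y, H x -> H y -> H (mul x y)) &
      (forall x y, H x -> S y -> mul x y = one -> H y)].

Definition finite_index_in {T : Type} (mul : T -> T -> T) (S H : set T) :=
  exists R : set T, [/\ finite_set R, R `<=` S &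
    forall s, S s -> exists r h, [/\ R r, H h & s = mul r h]].

Definition residually_finite_in {T : Type} (mul : T -> T -> T) (one : T)
  (S : set T) :=
  forall g, S g ->
    (forall H, subgroup_in mul one S H -> finite_index_in mul S H -> H g) ->
    g = one.

Definition residually_finite (G : groupType) :=
  residually_finite_in (fun x y : G => (x * y)%g) 1%g [set: G].

Section Shifts.
Variables (G : groupType) (A : finType).

Definition shift (g : G) (x : G -> A) : G -> A := fun h => x (g^-1 * h)%g.

Definition agree (F : set G) (x y : G -> A) := forall h, F h -> x h = y h.

(* closed in the prodiscrete topology *)
Definition pd_closed (X : set (G -> A)) :=
  forall x, ~ X x -> exists F : set G, finite_set F /\
    forall y, agree F x y -> ~ X y.

Definition shift_invariant (X : set (G -> A)) :=
  forall g x, X x -> X (shift g x).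

Definition subshift (X : set (G -> A)) := pd_closed X /\ shift_invariant X.

Definition finite_type (X : set (G -> A)) :=
  exists (Om : set G) (P : set ({h : G | Om h} -> A)), finite_set Om /\
    X = [set x | forall g, P (fun w => shift g x (proj1_sig w))].

Definition strongly_irreducible (X : set (G -> A)) :=
  exists Delta : set G, finite_set Delta /\
    forall Om1 Om2 : set G, finite_set Om1 -> finite_set Om2 ->
      (forall a d, Om1 a -> Delta d -> ~ Om2 (a * d^-1)%g) ->
      forall x1 x2, X x1 -> X x2 ->
        exists x, [/\ X x, agree Om1 x x1 & agree Om2 x x2].

Definition periodic (x : G -> A) := finite_set [set shift g x | g in [set: G]].

Definition pts (X : set (G -> A)) := {x : G -> A | X x}.

(* open subsets of X for the subspace topology of the prodiscrete topology *)
Definition open_in (X : set (G -> A)) (U : set (pts X)) :=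
  forall x, U x -> exists F : set G, finite_set F /\
    forall y : pts X, agree F (proj1_sig x) (proj1_sig y) -> U y.

(* cellular automaton X -> X: continuous and G-equivariant *)
Definition cellular_automaton (X : set (G -> A)) (tau : pts X -> pts X) :=
  (forall (x : pts X) (F : set G), finite_set F -> exists F' : set G,
     finite_set F' /\ forall y : pts X, agree F' (proj1_sig x) (proj1_sig y) ->
       agree F (proj1_sig (tau x)) (proj1_sig (tau y))) /\
  (forall (g : G) (x y : pts X), proj1_sig y = shift g (proj1_sig x) ->
     proj1_sig (tau y) = shift g (proj1_sig (tau x))).

Definition surjunctive (X : set (G -> A)) :=
  forall tau : pts X -> pts X, cellular_automaton tau -> injective tau ->
    forall y, exists x, tau x = y.

Definition Aut (X : set (G -> A)) : set (pts X -> pts X) :=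
  [set tau | cellular_automaton tau /\ bijective tau].

Definition Aut_residually_finite (X : set (G -> A)) :=
  residually_finite_in (fun f g : pts X -> pts X => f \o g) id (@Aut X).

Definition borel_X (X : set (G -> A)) : set (set (pts X)) :=
  <<s [set: pts X], @open_in X >>.

Definition borel_probability (R : realType) (X : set (G -> A))
  (mu : set (pts X) -> R) :=
  [/\ mu set0 = 0%R,
      (forall B, @borel_X X B -> (0 <= mu B)%R),
      (forall F : nat -> set (pts X), (forall n, @borel_X X (F n)) ->
         trivIset [set: nat] F ->
         ((fun n => \sum_(0 <= i < n) mu (F i))%R @ \oo --> mu (\bigcup_n F n))) &
      mu [set: pts X] = 1%R].

Definition shift_set (X : set (G -> A)) (g : G) (B : set (pts X)) : set (pts X) :=
  [set y | exists2 x, B x & proj1_sig y = shift g (proj1_sig x)].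

Definition invariant_measure (X : set (G -> A)) (R : realType)
  (mu : set (pts X) -> R) :=
  forall g B, @borel_X X B -> mu (shift_set g B) = mu B.

Definition full_support (X : set (G -> A)) (R : realType)
  (mu : set (pts X) -> R) :=
  forall U, @open_in X U -> U !=set0 -> (0 < mu U)%R.

End Shifts.

From Pilot Require Import Defs.
From HB Require Import structures.
From mathcomp Require Import all_boot all_order all_algebra.
From mathcomp Require Import monoid finmap.
From mathcomp Require Import all_classical all_reals topology normedtype sequences measure.
From mathcomp Require Import ereal esum.
Set Implicit Arguments. Unset Strict Implicit. Unset Printing Implicit Defensive.
Local Open Scope classical_set_scope.
Local Notation shift := Pilot.Defs.shift.
Import numFieldNormedType.Exports.

(* Strong irreducibility glues a pattern of any configuration of X, away from a
   Delta-neighbourhood of it, into the periodic configuration z.  Residual finiteness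
   gives a finite-index subgroup K of the stabilizer of z whose translates of the glued
   region are disjoint; repeating the glued pattern along K stays in X because X is of
   finite type.  Hence the points fixed by finite-index subgroups are dense in X.
   The points fixed by such a K form a finite set preserved by every cellular automaton.
   An injective one therefore permutes it, so its image is dense, and closed by
   compactness.  An automorphism moving some point moves a nearby point fixed by some K,
   and the automorphisms fixing all K-fixed points have finite index in Aut(X), since
   they are detected by the restriction to a finite set.  For countable G, a dense
   sequence of periodic points exists; averaging the uniform measures on their finite
   orbits with weights 2^-(m+1) gives an invariant probability of full support. *)

Section Prodiscrete.
Variables (G : groupType) (A : finType).
Local Notation T := (prod_topology (fun _ : G => discrete_topology A)).

Lemma prodiscrete_compact : compact [set: T].
Proof.
have := @tychonoff G (fun _ : G => discrete_topology A) (fun _ => setT)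
  (fun _ => @finite_compact (discrete_topology A) setT (@finite_finset A setT)).
by congr (compact _); rewrite eqEsubset.
Qed.

Lemma nbhs_agree (p : T) (E : set G) : finite_set E ->
  nbhs p [set y : T | agree E p y].
Proof.
move=> /finite_fsetP[E' ->].
have : nbhs p (\bigcap_(i in [set` E']) [set y : T | y i = p i]).
  apply: filter_bigI => i _.
  apply: (@proj_continuous G (fun _ : G => discrete_topology A) i p [set p i]).
  exact/principal_filterP.
by apply: filterS => y Hy h Eh; apply/esym/Hy.
Qed.

Lemma pd_closed_nested_cap (C : {fset G} -> set (G -> A)) :
  (forall F, pd_closed (C F)) ->
  (forall F1 F2 : {fset G}, (F1 `<=` F2)%fset -> C F2 `<=` C F1) ->
  (forall F, C F !=set0) -> exists x, forall F, C F x.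
Proof.
move=> Cclosed Cmono Cne.
have finIC : finI [set: {fset G}] C.
  move=> D _; have [x Cx] := Cne (\bigcup_(i <- D) i)%fset.
  exists x => i /= iD; apply: Cmono Cx.
  exact: (@bigfcup_sup _ _ D i xpredT id).
have PF := finI_filter finIC.
have [p [_ clp]] :=
  @prodiscrete_compact (filter_from (finI_from [set: {fset G}] C) id) PF filterT.
exists p => F; apply: contrapT => nCp.
have [E [finE CE]] := Cclosed F p nCp.
have [y [Cy pEy]] : C F `&` [set y : T | agree E p y] !=set0.
  apply: clp (nbhs_agree p finE).
  by exists (C F) => //; exact: (@finI_from1 _ _ setT C F I).
exact: CE y pEy Cy.
Qed.

End Prodiscrete.

Section Subgroups.
Variable G : groupType.
Local Open Scope group_scope.

Definition is_subgroup (H : set G) := subgroup_in (fun x y : G => x * y) 1 setT H.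
Definition has_finite_index (H : set G) := finite_index_in (fun x y : G => x * y) setT H.

Implicit Types H : set G.

Lemma subgroup1 H : is_subgroup H -> H 1.
Proof. by case. Qed.

Lemma subgroupM H x y : is_subgroup H -> H x -> H y -> H (x * y).
Proof. by case=> _ _ HM _; apply: HM. Qed.

Lemma subgroupV H x : is_subgroup H -> H x -> H x^-1.
Proof. by case=> _ _ _ HV Hx; apply: (HV x) => //; rewrite mulgV. Qed.

Lemma subgroupI H H' : is_subgroup H -> is_subgroup H' -> is_subgroup (H `&` H').
Proof.
move=> sH sH'; split=> //; first by split; apply: subgroup1.
- by move=> x y [? ?] [? ?]; split; apply: subgroupM.
- by move=> x y [Hx H'x] _ /mulg1_eq <-; split; apply: subgroupV.
Qed.

Lemma finite_indexI H H' : is_subgroup H -> is_subgroup H' ->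
  has_finite_index H -> has_finite_index H' -> has_finite_index (H `&` H').
Proof.
move=> sH sH' [R [finR _ coverR]] [R' [finR' _ coverR']].
pose common (r : G * G) : G :=
  if pselect (exists c, exists h h', [/\ H h, H' h', c = r.1 * h & c = r.2 * h'])
  is left e then projT1 (cid e) else 1.
exists (common @` (R `*` R')); split => //; first exact/finite_image/finite_setX.
move=> s _; have [r [h [Rr Hh ->]]] := coverR s I.
have [r' [h' [Rr' H'h' rhE]]] := coverR' (r * h) I.
exists (common (r, r')), ((common (r, r'))^-1 * (r * h)); split.
- by exists (r, r').
- rewrite /common; case: pselect => [e|]; last by case; exists (r * h), h, h'.
  case: (cid e) => c [k [k' [Hk H'k' ckE ck'E]]] /=.
  split; first by rewrite ckE invgM -mulgA mulKg; apply: subgroupM => //; apply: subgroupV.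
  by rewrite ck'E rhE invgM -mulgA mulKg; apply: subgroupM => //; apply: subgroupV.
- by rewrite mulVKg.
Qed.

End Subgroups.

Lemma residually_finite_avoid (G : groupType) (H0 : set G) :
  residually_finite G -> is_subgroup H0 -> has_finite_index H0 ->
  forall s : seq G, exists K, [/\ is_subgroup K, has_finite_index K, K `<=` H0 &
    {in s, forall e, K e -> e = 1%g}].
Proof.
move=> rf sH0 fH0; elim=> [|e s [K [sK fK KH0 Kavoid]]]; first by exists H0; split.
have [->|e_neq1] := eqVneq e 1%g.
  by exists K; split=> // e'; rewrite inE => /orP[/eqP -> //|/Kavoid].
have [H [sH fH nHe]] : exists H, [/\ is_subgroup H, has_finite_index H & ~ H e].
  apply: contrapT => nex; move/eqP: e_neq1; apply; apply: (rf e I) => H sH fH.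
  by apply: contrapT => nHe; apply: nex; exists H.
exists (K `&` H); split; [exact: subgroupI|exact: finite_indexI|by move=> g [/KH0]|].
move=> e'; rewrite inE => /orP[/eqP -> [_ /nHe] //|/Kavoid Kavoid' [Ke' _]].
exact: Kavoid'.
Qed.

Section ShiftAction.
Variables (G : groupType) (A : finType).
Local Open Scope group_scope.
Implicit Types (x : G -> A) (K : set G).

Lemma shift1 x : shift 1 x = x.
Proof. by apply: funext => h; rewrite /shift invg1 mul1g. Qed.

Lemma shiftM g h x : shift g (shift h x) = shift (g * h) x.
Proof. by apply: funext => k; rewrite /shift invgM mulgA. Qed.

Lemma shiftK g x : shift g^-1 (shift g x) = x.
Proof. by rewrite shiftM mulVg shift1. Qed.

Definition stab x := [set g : G | shift g x = x].

Definition fixpts (X : set (G -> A)) K := [set q : pts X | K `<=` stab (proj1_sig q)].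

Lemma stab_invariant K x k g : K `<=` stab x -> K k -> x (k^-1 * g) = x g.
Proof. by move=> /(_ k) Kx /Kx {2}<-. Qed.

Lemma subgroup_stab x : is_subgroup (stab x).
Proof.
split=> // [|g h|g h]; first exact: shift1.
  by rewrite /stab /= => gx hx; rewrite -shiftM hx gx.
by rewrite /stab /= => gx _ /mulg1_eq <-; rewrite -{1}gx shiftK.
Qed.

Lemma finite_index_stab x : periodic x -> has_finite_index (stab x).
Proof.
move=> per.
pose rep (o : G -> A) : G :=
  if pselect (exists g, shift g x = o) is left e then projT1 (cid e) else 1.
have repP g : shift (rep (shift g x)) x = shift g x.
  rewrite /rep; case: pselect => [e|]; first by case: (cid e).
  by case; exists g.
exists (rep @` [set shift g x | g in [set: G]]); split => //; first exact: finite_image.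
move=> s _; have := repP s; set r := rep (shift s x) => rE.
exists r, (r^-1 * s); split.
- by exists (shift s x) => //; exists s.
- by rewrite /stab /= -shiftM -rE shiftK.
- by rewrite mulVKg.
Qed.

Lemma finite_index_periodic K x : has_finite_index K -> K `<=` stab x -> periodic x.
Proof.
move=> [R [finR _ coverR]] Kx.
apply: (sub_finite_set _ (finite_image (fun r => shift r x) finR)).
move=> _ [g _ <-]; have [r [h [Rr Kh ->]]] := coverR g I.
by exists r => //; rewrite -shiftM (Kx h Kh).
Qed.

Definition fixpts_dense (X : set (G -> A)) :=
  forall (q : pts X) (F : set G), finite_set F -> exists K (p : pts X),
    [/\ is_subgroup K, has_finite_index K, fixpts K p & agree F (proj1_sig p) (proj1_sig q)].

End ShiftAction.

Section Periodization.
Variables (G : groupType) (A : finType).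
Local Open Scope group_scope.
Variables (K N : set G) (x z : G -> A).
Hypothesis Kz : K `<=` stab z.
Hypothesis K_sparse :
  forall k k' g, K k -> K k' -> N (k^-1 * g) -> N (k'^-1 * g) -> k = k'.

Definition periodize (g : G) : A :=
  if pselect (exists k, K k /\ N (k^-1 * g)) is left e
  then x ((projT1 (cid e))^-1 * g) else z g.

Lemma periodize_in k g : K k -> N (k^-1 * g) -> periodize g = x (k^-1 * g).
Proof.
move=> Kk Nkg; rewrite /periodize; case: pselect => [e|]; last by case; exists k.
by case: (cid e) => k' /= [Kk' Nk'g]; rewrite (K_sparse Kk' Kk Nk'g Nkg).
Qed.

Lemma periodize_out g : ~ (exists k, K k /\ N (k^-1 * g)) -> periodize g = z g.
Proof. by rewrite /periodize; case: pselect. Qed.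

Lemma periodize_fixed : is_subgroup K -> K `<=` stab periodize.
Proof.
move=> sK k0 Kk0; apply: funext => g; rewrite /shift.
have [[k [Kk Nkg]]|noK] := pselect (exists k, K k /\ N (k^-1 * g)).
  have Kk' : K (k0^-1 * k) by apply: subgroupM => //; apply: subgroupV.
  have Nk'g : N ((k0^-1 * k)^-1 * (k0^-1 * g)) by rewrite invgM invgK -mulgA mulVKg.
  by rewrite (periodize_in Kk' Nk'g) (periodize_in Kk Nkg) invgM invgK -mulgA mulVKg.
rewrite !periodize_out ?(stab_invariant _ Kz) // => -[k [Kk Nkg]].
by apply: noK; exists (k0 * k); split; [exact: subgroupM|rewrite invgM -mulgA].
Qed.

End Periodization.

Section Density.
Variables (G : groupType) (A : finType).
Local Open Scope group_scope.
Variables (X : set (G -> A)) (Om : set G) (P : set ({h : G | Om h} -> A)).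
Hypothesis finOm : finite_set Om.
Hypothesis XE : X = [set x | forall g, P (fun w => shift g x (proj1_sig w))].

Lemma window_mem u g : X u -> P (fun w => shift g u (proj1_sig w)).
Proof. by rewrite XE => /(_ g). Qed.

(* [F1] is the region where [x] may differ from [z]; [N] contains every
   [Om]-window meeting [F1], so each window of the result is a window of [x] or of [z]. *)
Lemma periodize_mem (K N F1 : set G) (x z : G -> A) :
  (forall k k' g, K k -> K k' -> N (k^-1 * g) -> N (k'^-1 * g) -> k = k') ->
  K `<=` stab z -> X x -> X z ->
  (forall a w0 w, F1 a -> Om w0 -> Om w -> N (a * w0^-1 * w)) ->
  agree (N `\` F1) x z -> X (periodize K N x z).
Proof.
move=> K_sparse Kz Xx Xz N_window xz; rewrite XE => g.
have [[w0 [Omw0 [k [Kk F1k]]]]|noF1] :=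
  pselect (exists w0, Om w0 /\ exists k, K k /\ F1 (k^-1 * (g^-1 * w0))).
  suff -> : (fun w : {h | Om h} => shift g (periodize K N x z) (proj1_sig w)) =
            (fun w => shift (g * k) x (proj1_sig w)) by exact: window_mem.
  apply: funext => -[w Omw] /=; rewrite /shift invgM -mulgA.
  apply: periodize_in => //; rewrite mulgA.
  by have := N_window _ _ _ F1k Omw0 Omw; rewrite !mulgA mulgK.
suff -> : (fun w : {h | Om h} => shift g (periodize K N x z) (proj1_sig w)) =
          (fun w => shift g z (proj1_sig w)) by exact: window_mem.
apply: funext => -[w Omw] /=; rewrite /shift.
have [[k [Kk Nk]]|noN] := pselect (exists k, K k /\ N (k^-1 * (g^-1 * w))).
  rewrite (periodize_in x z K_sparse Kk Nk) xz ?(stab_invariant _ Kz Kk) //.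
  by split=> // F1k; apply: noF1; exists w; split=> //; exists k.
exact: periodize_out.
Qed.

Variable Delta : set G.
Hypothesis finDelta : finite_set Delta.
Hypothesis SI : forall Om1 Om2 : set G, finite_set Om1 -> finite_set Om2 ->
      (forall a d, Om1 a -> Delta d -> ~ Om2 (a * d^-1)%g) ->
      forall x1 x2, X x1 -> X x2 ->
        exists x, [/\ X x, agree Om1 x x1 & agree Om2 x x2].
Hypothesis rf : residually_finite G.
Variable z : G -> A.
Hypotheses (Xz : X z) (perz : periodic z).

Lemma strongly_irreducible_fixpts_dense : fixpts_dense X.
Proof.
move=> [x Xx] F finF /=.
pose F1 := F `|` ((fun p => p.1 * p.2^-1) @` (F `*` Delta)).
have finF1 : finite_set F1.
  by rewrite finite_setU; split=> //; apply/finite_image/finite_setX.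
pose N := F1 `|` ((fun t => t.1.1 * t.1.2^-1 * t.2) @` (F1 `*` Om `*` Om)).
have finN : finite_set N.
  by rewrite finite_setU; split=> //; apply/finite_image/finite_setX => //; apply: finite_setX.
have [x' [Xx' x'x x'z]] : exists x', [/\ X x', agree F x' x & agree (N `\` F1) x' z].
  apply: SI => //; first exact: finite_setD.
  by move=> a d Fa Dd [_]; apply; right; exists (a, d).
have /finite_fsetP[E EE] : finite_set ((fun p => p.1 * p.2^-1) @` (N `*` N)).
  exact/finite_image/finite_setX.
have [K [sK fK Kz Kavoid]] :=
  residually_finite_avoid rf (subgroup_stab z) (finite_index_stab perz) E.
(* The [K]-translates of [N] are disjoint since [K] meets [N N^-1] only in [1]. *)
have K_sparse k k' g : K k -> K k' -> N (k^-1 * g) -> N (k'^-1 * g) -> k = k'.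
  move=> Kk Kk' Nkg Nk'g; apply/esym; rewrite -[k']invgK; apply: mulg1_eq.
  have : [set` E] (k'^-1 * k).
    by rewrite -EE; exists (k'^-1 * g, k^-1 * g); rewrite //= invgM invgK mulgA mulgK.
  by move/Kavoid; apply; apply: subgroupM => //; apply: subgroupV.
have Xy : X (periodize K N x' z).
  apply: (periodize_mem K_sparse Kz Xx' Xz _ x'z) => a w0 w F1a Omw0 Omw.
  by right; exists (a, w0, w).
exists K, (exist _ _ Xy); split => //=; first exact: periodize_fixed.
move=> f Ff; rewrite (periodize_in x' z K_sparse (subgroup1 sK)) ?invg1 ?mul1g.
  exact: x'x.
by left; left.
Qed.

End Density.

Lemma finite_set_inj (T U : Type) (S : set T) (B : set U) (f : T -> U) :
  set_inj S f -> set_fun S B f -> finite_set B -> finite_set S.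
Proof.
move=> finj SB finB; have [->|/set0P[q0 _]] := eqVneq S set0; first exact: finite_set0.
rewrite -(injpinv_image (fun=> q0) finj); apply/finite_image/(sub_finite_set _ finB).
by move=> _ [q Sq <-]; apply: SB.
Qed.

Lemma finite_inj_surj (T : Type) (S : set T) (f : T -> T) :
  finite_set S -> set_fun S S f -> set_inj S f -> S `<=` f @` S.
Proof.
move=> finS SS finj.
have /finite_fsetP[s sE] : finite_set (S : set {classic T}) by [].
have sS (x : {classic T}) : S x <-> x \in s by rewrite sE.
pose f' : {classic T} -> {classic T} := f.
have fs_eq : (f' @` s)%fset = s.
  apply/eqP; rewrite eqEfcard card_in_imfset /= ?leqnn ?andbT; last first.
    by move=> a b /sS Sa /sS Sb; apply: finj; rewrite in_setE.
  by apply/fsubsetP => _ /imfsetP[x /sS Sx ->]; apply/sS/SS.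
by move=> y /sS; rewrite -fs_eq => /imfsetP[x /sS Sx ->]; exists x.
Qed.

Section CellularAutomata.
Variables (G : groupType) (A : finType).
Local Open Scope group_scope.
Variable X : set (G -> A).
Hypotheses (Xclosed : pd_closed X) (Xinv : shift_invariant X).
Implicit Types (tau sigma : pts X -> pts X) (K : set G).
Local Notation fixpts := (@fixpts G A X).

Lemma pts_inj (p q : pts X) : proj1_sig p = proj1_sig q -> p = q.
Proof. by case: p q => p Xp [q Xq] /= pq; apply: eq_exist. Qed.

(* A point fixed by [K] is determined by its values at the inverses of coset representatives. *)
Lemma fixpts_code K : has_finite_index K ->
  exists n (code : pts X -> n.-tuple A), set_inj (fixpts K) code.
Proof.
move=> [R [finR _ coverR]]; have /finite_fsetP[sR RE] := finR.
exists (size (enum_fset sR)),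
  (fun q => map_tuple (fun r => proj1_sig q r^-1) (in_tuple (enum_fset sR))).
move=> a b; rewrite !in_setE => Ka Kb /(congr1 val) /= /eq_in_map ab.
apply: pts_inj; apply: funext => g.
have [r [h [Rr Kh gE]]] := coverR g^-1 I.
have -> : g = h^-1 * r^-1 by rewrite -invgM -gE invgK.
rewrite (stab_invariant _ Ka Kh) (stab_invariant _ Kb Kh); apply: ab.
by have : [set` sR] r by rewrite -RE.
Qed.

Lemma finite_fixpts K : has_finite_index K -> finite_set (fixpts K).
Proof.
by move=> /fixpts_code[n [code code_inj]]; apply: (finite_set_inj code_inj _ finite_finset).
Qed.

Lemma ca_fixpts tau K : cellular_automaton tau -> set_fun (fixpts K) (fixpts K) tau.
Proof.
move=> [_ equiv] q Kq k Kk; apply/esym.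
by apply: (equiv k q q); rewrite /= (Kq k Kk).
Qed.

Lemma ca_disagree_open tau (q : pts X) (F : set G) (y : G -> A) :
  cellular_automaton tau -> finite_set F ->
  ~ agree F (proj1_sig (tau q)) y ->
  exists F', finite_set F' /\ forall q' : pts X,
    agree F' (proj1_sig q) (proj1_sig q') -> ~ agree F (proj1_sig (tau q')) y.
Proof.
move=> [cont _] finF tqy; have [F' [finF' qF']] := cont q F finF.
by exists F'; split=> // q' qq' tq'y; apply: tqy => h Fh; rewrite (qF' q' qq' h Fh) tq'y.
Qed.

(* The image of a closed set under a cellular automaton is closed, by compactness. *)
Lemma ca_image_closed tau (Q : set (G -> A)) (y : G -> A) :
  cellular_automaton tau -> pd_closed Q ->
  (forall F : {fset G}, exists q, Q (proj1_sig q) /\ agree [set` F] (proj1_sig (tau q)) y) ->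
  exists q, Q (proj1_sig q) /\ proj1_sig (tau q) = y.
Proof.
move=> CAtau Qclosed approx.
pose C (F : {fset G}) : set (G -> A) := [set u | exists Xu : X u,
  Q u /\ agree [set` F] (proj1_sig (tau (exist _ u Xu))) y].
have [u Cu] : exists u, forall F, C F u.
  apply: pd_closed_nested_cap.
  - move=> F u nCu.
    have [Xu|nXu] := pselect (X u); last first.
      have [F0 [finF0 F0X]] := Xclosed nXu.
      by exists F0; split=> // v uv [Xv _]; apply: F0X uv Xv.
    have [Qu|nQu] := pselect (Q u); last first.
      have [F0 [finF0 F0Q]] := Qclosed u nQu.
      by exists F0; split=> // v uv [_ [Qv _]]; apply: F0Q uv Qv.
    have nag : ~ agree [set` F] (proj1_sig (tau (exist _ u Xu))) y.
      by move=> ag; apply: nCu; exists Xu.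
    have [F' [finF' F'dis]] := ca_disagree_open CAtau (finite_fset F) nag.
    by exists F'; split=> // v uv [Xv [_ ag]]; apply: (F'dis (exist _ v Xv)) uv ag.
  - move=> F1 F2 /fsubsetP F12 u [Xu [Qu ag]]; exists Xu; split=> // g /F12.
    exact: ag.
  - by move=> F; have [[v Xv] [Qv ag]] := approx F; exists v, Xv.
have [Xu [Qu _]] := Cu fset0.
exists (exist _ u Xu); split=> //; apply: funext => g.
have [Xu' [_ ag]] := Cu [fset g]%fset.
have -> : exist _ u Xu = exist _ u Xu' by apply: pts_inj.
by apply: ag; rewrite /= inE.
Qed.

Lemma ca_id : cellular_automaton (@id (pts X)).
Proof. by split=> // x F finF; exists F. Qed.

Lemma ca_comp tau sigma :
  cellular_automaton tau -> cellular_automaton sigma -> cellular_automaton (tau \o sigma).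
Proof.
move=> [cont_tau equiv_tau] [cont_sigma equiv_sigma]; split.
- move=> x F finF; have [F2 [finF2 F2tau]] := cont_tau (sigma x) F finF.
  have [F1 [finF1 F1sigma]] := cont_sigma x F2 finF2.
  by exists F1; split=> // y xy; apply/F2tau/F1sigma.
- by move=> k x y xy /=; apply/equiv_tau/equiv_sigma.
Qed.

Lemma ca_inv tau sigma : cellular_automaton tau ->
  cancel tau sigma -> cancel sigma tau -> cellular_automaton sigma.
Proof.
move=> CAtau tauK sigmaK; split; last first.
  move=> k x y yx.
  pose w : pts X := exist _ (shift k (proj1_sig (sigma x))) (Xinv k (proj2_sig (sigma x))).
  have <- : tau w = y by apply: pts_inj; rewrite yx (CAtau.2 k (sigma x) w erefl) sigmaK.
  by rewrite tauK.
move=> x F finF; apply: contrapT => noF'.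
have [q [qF tq]] : exists q, ~ agree F (proj1_sig q) (proj1_sig (sigma x)) /\
    proj1_sig (tau q) = proj1_sig x.
  apply: (@ca_image_closed _ [set u | ~ agree F u (proj1_sig (sigma x))] _ CAtau).
    move=> u /contrapT uF; exists F; split=> // v uv; apply.
    by move=> g Fg; rewrite -uv ?uF.
  move=> F'.
  have [y [xy sxy]] : exists y : pts X, agree [set` F'] (proj1_sig x) (proj1_sig y) /\
      ~ agree F (proj1_sig (sigma x)) (proj1_sig (sigma y)).
    apply: contrapT => noy; apply: noF'; exists [set` F']; split; first exact: finite_fset.
    by move=> y xy; apply: contrapT => sxy; apply: noy; exists y.
  exists (sigma y); rewrite sigmaK; split; last by move=> g /xy.
  by move=> ag; apply: sxy => g /ag.
by apply: qF; rewrite -(tauK q) (pts_inj tq).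
Qed.

Section DenseFixpts.
Hypothesis dense : fixpts_dense X.

(* An injective cellular automaton permutes each finite set [fixpts K]. *)
Lemma surjunctive_of_fixpts_dense : surjunctive X.
Proof.
move=> tau CAtau tau_inj y.
have approx (F : {fset G}) :
    exists q, setT (proj1_sig q) /\ agree [set` F] (proj1_sig (tau q)) (proj1_sig y).
  have [K [p [_ fK Kp py]]] := dense y (finite_fset F).
  have [q Kq tq] := finite_inj_surj (finite_fixpts fK) (@ca_fixpts _ K CAtau)
    (in2W tau_inj) Kp.
  by exists q; rewrite tq.
have [|q [_ tq]] := ca_image_closed CAtau _ approx; first by move=> u [].
by exists q; apply: pts_inj.
Qed.

Definition aut_fixing K := [set s | Aut s /\ forall q, fixpts K q -> s q = q].

Definition fixpts_selfmaps K := [set f : pts X -> pts X |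
  (forall q, ~ fixpts K q -> f q = q) /\ set_fun (fixpts K) (fixpts K) f].

Definition restrict_fixpts K (s : pts X -> pts X) (q : pts X) :=
  if pselect (fixpts K q) then s q else q.

Lemma aut_id : Aut (@id (pts X)).
Proof. by split; [exact: ca_id|exists id]. Qed.

Lemma subgroup_aut_fixing K :
  subgroup_in (fun f g : pts X -> pts X => f \o g) id (@Aut G A X) (aut_fixing K).
Proof.
split; first by move=> s [].
- by split; [exact: aut_id|].
- move=> s1 s2 [[CA1 bij1] fix1] [[CA2 bij2] fix2]; split.
    by split; [exact: ca_comp|exact: bij_comp].
  by move=> q Kq /=; rewrite fix2 // fix1.
- move=> s1 s2 [_ fix1] [CA2 bij2] s12; split=> // q Kq.
  have s12q : s1 (s2 q) = q by rewrite [LHS](congr1 (fun f => f q) s12).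
  by rewrite -[RHS]s12q fix1 //; apply: ca_fixpts.
Qed.

Lemma finite_fixpts_selfmaps K : has_finite_index K -> finite_set (fixpts_selfmaps K).
Proof.
move=> fK; have [n [code code_inj]] := fixpts_code fK.
have /(@finite_fsetP {classic (pts X)}) [sF FE] := finite_fixpts fK.
pose l := enum_fset sF.
have inl q : fixpts K q -> (q : {classic (pts X)}) \in l.
  by move=> Kq; have : [set` sF] (q : {classic (pts X)}) by rewrite -FE.
apply: (@finite_set_inj _ _ _ [set: (size l).-tuple (n.-tuple A)]
  (fun f => map_tuple (fun q => code (f q)) (in_tuple l)) _ (fun _ _ => I) finite_finset).
move=> f1 f2; rewrite !in_setE => -[id1 fix1] [id2 fix2] /(congr1 val) /= /eq_in_map f12.
apply: funext => q; have [Kq|nKq] := pselect (fixpts K q); last by rewrite id1 ?id2.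
by apply: code_inj; rewrite ?in_setE; [exact: fix1|exact: fix2|exact: f12 (inl q Kq)].
Qed.

(* Restriction to the finite set [fixpts K] separates the cosets of [aut_fixing K]. *)
Lemma finite_index_aut_fixing K : has_finite_index K ->
  finite_index_in (fun f g : pts X -> pts X => f \o g) (@Aut G A X) (aut_fixing K).
Proof.
move=> fK.
pose rep f := if pselect (exists s, Aut s /\ restrict_fixpts K s = f) is left e
  then projT1 (cid e) else id.
have repA f : Aut (rep f).
  by rewrite /rep; case: pselect => [e|_]; [case: (cid e) => s []|exact: aut_id].
exists (rep @` fixpts_selfmaps K); split; first exact/finite_image/finite_fixpts_selfmaps.
  by move=> _ [f _ <-].
move=> s [CAs bijs].
have restrict_rep : restrict_fixpts K (rep (restrict_fixpts K s)) = restrict_fixpts K s.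
  by rewrite /rep; case: pselect => [e|]; [case: (cid e) => s' []|case; exists s].
move: (repA (restrict_fixpts K s)) restrict_rep.
set r := rep _ => -[CAr [ri rK riK]] restrict_rep.
exists r, (ri \o s); split.
- exists (restrict_fixpts K s) => //; split=> q; rewrite /restrict_fixpts.
    by case: pselect.
  by move=> Kq; destruct (pselect (fixpts K q)) => //; apply: ca_fixpts.
- split; first by split; [exact: ca_comp (ca_inv CAr rK riK) CAs|apply: bij_comp => //; exists r].
  move=> q Kq /=; have := congr1 (fun f => f q) restrict_rep.
  by rewrite /restrict_fixpts; destruct (pselect (fixpts K q)) => //= <-.
- by apply: funext => q /=; rewrite riK.
Qed.

Lemma aut_moves_fixpt tau : Aut tau -> tau <> id ->
  exists K p, [/\ has_finite_index K, fixpts K p & tau p <> p].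
Proof.
move=> [CAtau _] tau_neq_id.
have [x tx] : exists x, tau x <> x.
  apply: contrapT => nx; apply: tau_neq_id; apply: funext => x.
  by apply: contrapT => tx; apply: nx; exists x.
have [g0 txg0] : exists g0, proj1_sig (tau x) g0 <> proj1_sig x g0.
  apply: contrapT => ng; apply: tx; apply: pts_inj; apply: funext => g.
  by apply: contrapT => txg; apply: ng; exists g.
have [F [finF Ftau]] := CAtau.1 x [set g0] (finite_set1 g0).
have finFg0 : finite_set (F `|` [set g0]) by rewrite finite_setU; split.
have [K [p [_ fK Kp px]]] := dense x finFg0.
exists K, p; split=> // tp; apply: txg0.
have xp : agree F (proj1_sig x) (proj1_sig p) by move=> g Fg; rewrite px //; left.
by rewrite (Ftau p xp g0 erefl) tp px //; right.
Qed.

Lemma aut_residually_finite_of_fixpts_dense : Aut_residually_finite X.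
Proof.
move=> tau Atau all_fi; apply: contrapT => /(aut_moves_fixpt Atau)[K [p [fK Kp tp]]].
apply: tp; have [_ ->] // := all_fi _ (subgroup_aut_fixing K) (finite_index_aut_fixing fK).
Qed.

End DenseFixpts.
End CellularAutomata.

Section OrbitMixture.
Import Order.TTheory GRing.Theory Num.Theory.
Local Open Scope ring_scope.
Variables (R : realType) (T : choiceType) (O : nat -> set T) (q : nat -> T).
Hypothesis finO : forall m, finite_set (O m).
Hypothesis Oq : forall m, O m (q m).

(* [mixture] is the normalization of the sum over [m] of [2^-(m+1)] times
   the uniform probability on [O m]. *)
Definition count_in m (B : set T) : \bar R := (\esum_(o in O m `&` B) 1)%E.
Definition size_O m : nat := #|` fset_set (O m)|.
Definition weight m : R := ((2 ^ m.+1)%:R * (size_O m)%:R)^-1.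
Definition mass (B : set T) : \bar R := (\sum_(m <oo) (weight m)%:E * count_in m B)%E.
Definition mixture (B : set T) : R := fine (mass B) / fine (mass setT).

Lemma count_in_ge0 m B : (0 <= count_in m B)%E.
Proof. exact: esum_ge0. Qed.

Lemma size_O_gt0 m : (0 < size_O m)%N.
Proof.
rewrite /size_O cardfs_gt0; apply/eqP => O0.
have : q m \in fset_set (O m) by rewrite in_fset_set // inE.
by rewrite O0 inE.
Qed.

Lemma weight_gt0 m : 0 < weight m.
Proof. by rewrite invr_gt0 mulr_gt0 // ltr0n ?expn_gt0 // size_O_gt0. Qed.

Lemma weighted_count_ge0 m B : (0 <= (weight m)%:E * count_in m B)%E.
Proof. by apply: mule_ge0; [rewrite lee_fin ltW // weight_gt0|exact: count_in_ge0]. Qed.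

Lemma count_inT m : count_in m setT = (size_O m)%:R%:E.
Proof.
rewrite /count_in setIT esum_fset // fsbig_finite //= sumEFin.
by rewrite /size_O -sum1_size natr_sum.
Qed.

Lemma count_in_le m B : (count_in m B <= count_in m setT)%E.
Proof.
by rewrite /count_in esum_mkcondr setIT; apply: le_esum => i _; case: ifP.
Qed.

Lemma weighted_countT m : ((weight m)%:E * count_in m setT)%E = ((2 ^ m.+1)%:R^-1)%:E.
Proof.
rewrite count_inT -EFinM /weight invfM -mulrA mulVf ?mulr1 //.
by rewrite pnatr_eq0 -lt0n size_O_gt0.
Qed.

Lemma mass_ge0 B : (0 <= mass B)%E.
Proof. by apply: nneseries_ge0 => n _ _; apply: weighted_count_ge0. Qed.

Lemma mass_le B : (mass B <= mass setT)%E.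
Proof.
apply: lee_nneseries => [n _ _|n _]; first exact: weighted_count_ge0.
by apply: lee_wpmul2l; [rewrite lee_fin ltW // weight_gt0|exact: count_in_le].
Qed.

Lemma massT_le1 : (mass setT <= 1)%E.
Proof.
rewrite /mass; under eq_eseriesr do rewrite weighted_countT.
have := @epsilon_trick R (fun=> 0%E) 1 xpredT (fun=> lexx _) ler01.
have sum0 : (\sum_(0 <= i <oo) (fun=> (0 : \bar R)) i = 0)%E by rewrite eseries0.
rewrite sum0 add0e; apply: le_trans; apply: lee_nneseries => //.
by move=> n _; rewrite add0e div1r.
Qed.

Lemma massT_gt0 : (0 < mass setT)%E.
Proof.
apply: (@lt_le_trans _ _ (\sum_(0 <= i < 1) ((weight i)%:E * count_in i setT))%E).
  by rewrite big_nat1 weighted_countT lte_fin invr_gt0 ltr0n expn_gt0.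
by apply: nneseries_lim_ge => n _ _; apply: weighted_count_ge0.
Qed.

Lemma mass_fin B : mass B \is a fin_num.
Proof.
rewrite ge0_fin_numE ?mass_ge0 //.
by rewrite (le_lt_trans (mass_le B)) // (le_lt_trans massT_le1) ?ltry.
Qed.

Lemma fine_massT_gt0 : 0 < fine (mass setT).
Proof. by apply: fine_gt0; rewrite massT_gt0 (le_lt_trans massT_le1) ?ltry. Qed.

Lemma mixture0 : mixture set0 = 0.
Proof.
rewrite /mixture /mass eseries0 ?mul0r // => i _ _.
by rewrite /count_in setI0 esum_set0 mule0.
Qed.

Lemma mixture_ge0 B : 0 <= mixture B.
Proof. by rewrite divr_ge0 ?fine_ge0 ?mass_ge0 // ltW // fine_massT_gt0. Qed.

Lemma mixtureT : mixture setT = 1.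
Proof. by rewrite /mixture divff // gt_eqF // fine_massT_gt0. Qed.

Lemma mass_bigcup (F : nat -> set T) : trivIset setT F ->
  mass (\bigcup_n F n) = (\sum_(i <oo) mass (F i))%E.
Proof.
move=> tF; rewrite /mass.
transitivity (\sum_(m <oo) \sum_(i <oo) ((weight m)%:E * count_in m (F i)))%E.
  apply: eq_eseriesr => m _; rewrite nneseriesZl => [|i _]; last exact: count_in_ge0.
  congr (_ * _)%E; rewrite /count_in setI_bigcupr nneseries_sum_bigcup //.
  exact: trivIset_setIl.
by rewrite nneseries_interchange // => i j; apply: weighted_count_ge0.
Qed.

Lemma mixture_sigma_additive (F : nat -> set T) : trivIset setT F ->
  (fun n => \sum_(0 <= i < n) mixture (F i)) @ \oo --> mixture (\bigcup_n F n).
Proof.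
move=> tF.
have cv : (fun n => \sum_(0 <= i < n) mass (F i))%E @ \oo --> mass (\bigcup_n F n).
  by rewrite mass_bigcup //; apply: is_cvg_nneseries => n _ _; apply: mass_ge0.
rewrite -(fineK (mass_fin _)) in cv.
have -> : (fun n => \sum_(0 <= i < n) mixture (F i)) =
    (fun n => (fine \o (fun n => \sum_(0 <= i < n) mass (F i))%E) n / fine (mass setT)).
  apply: funext => n /=; rewrite /mixture -mulr_suml sum_fine //.
  by move=> i _; apply: mass_fin.
by apply: cvgMr_tmp; apply: fine_cvg.
Qed.

Lemma mixture_bij B B' (f : T -> T) :
  (forall m, set_bij (O m `&` B) (O m `&` B') f) -> mixture B' = mixture B.
Proof.
move=> fbij; rewrite /mixture /mass; congr (fine _ / _); apply: eq_eseriesr => m _.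
by congr (_ * _)%E; rewrite /count_in (@reindex_esum R T T _ _ f (fun=> 1%E) (fbij m)).
Qed.

Lemma mixture_gt0 U m : U (q m) -> 0 < mixture U.
Proof.
move=> Uq; rewrite /mixture divr_gt0 ?fine_massT_gt0 // fine_gt0 // andbC.
have := mass_fin U; rewrite ge0_fin_numE ?mass_ge0 // => ->.
apply: (@lt_le_trans _ _ ((weight m)%:E * count_in m U)%E).
  rewrite mule_gt0 ?lte_fin ?weight_gt0 // (@lt_le_trans _ _ 1%E) ?lte_fin //.
  apply: esum_ge; exists [set q m]; last by rewrite fsbig_set1.
  by split; [exact: finite_set1|move=> x ->].
apply: (@le_trans _ _ (\sum_(0 <= i < m.+1) ((weight i)%:E * count_in i U))%E).
  by rewrite big_nat_recr //= leeDr //; apply: sume_ge0 => i _; apply: weighted_count_ge0.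
by apply: nneseries_lim_ge => n _ _; apply: weighted_count_ge0.
Qed.

End OrbitMixture.

Lemma countable_exhaust (G : Type) (g0 : G) : countable [set: G] ->
  exists e : nat -> G, forall F, finite_set F -> exists n, F `<=` e @` `I_n.
Proof.
move=> /countable_injP[f finj].
have eK g : 'pinv_(fun=> g0) [set: G] f (f g) = g.
  by apply: (pinvKV _ finj); rewrite in_setE.
exists ('pinv_(fun=> g0) [set: G] f) => F finF.
have /finite_fsetP[F' ->] : finite_set (F : set {classic G}) by [].
exists (\max_(h <- F') f h).+1 => h hF; exists (f h); last exact: eK.
by rewrite /= ltnS; apply: leq_bigmax_seq.
Qed.

Section PeriodicSequence.
Variables (G : groupType) (A : finType) (X : set (G -> A)).
Hypothesis dense : fixpts_dense X.
Variable z : pts X.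
Hypothesis perz : periodic (proj1_sig z).

(* Enumerate [G] as [e 0, e 1, ...]; for each finite word [s] pick a periodic point
   reading [s] along [e 0, ..., e (size s - 1)]. *)
Lemma periodic_dense_seq : countable [set: G] -> exists q : nat -> pts X,
  (forall m, periodic (proj1_sig (q m))) /\
  forall (x : pts X) (F : set G), finite_set F ->
    exists m, agree F (proj1_sig x) (proj1_sig (q m)).
Proof.
move=> /(countable_exhaust 1%g)[e e_exhaust].
pose pattern n (y : G -> A) := [seq y (e i) | i <- iota 0 n].
pose has_pattern (s : seq A) (p : pts X) :=
  periodic (proj1_sig p) /\ pattern (size s) (proj1_sig p) = s.
pose pick s := if pselect (exists p, has_pattern s p) is left ex then projT1 (cid ex) else z.
have pickP s : (exists p, has_pattern s p) -> has_pattern s (pick s).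
  by rewrite /pick; case: pselect => // ex _; case: (cid ex).
have pick_periodic s : periodic (proj1_sig (pick s)).
  by rewrite /pick; case: pselect => // ex; case: (cid ex) => p [].
exists (fun m => if choice.unpickle m is Some s then pick s else z); split.
  by move=> m; case: choice.unpickle.
move=> x F finF; have [n Fe] := e_exhaust F finF.
have [K [p [_ fK Kp px]]] := dense x (finite_image e (finite_II n)).
pose s := pattern n (proj1_sig x).
have size_s : size s = n by rewrite size_map size_iota.
have [_] : has_pattern s (pick s).
  apply: pickP; exists p; split; first exact: finite_index_periodic fK Kp.
  rewrite size_s; apply/eq_in_map => i; rewrite mem_iota => /andP[_ ilt].
  by apply: px; exists i.
rewrite size_s => /eq_in_map pick_x.
exists (choice.pickle s); rewrite choice.pickleK => h /Fe[i ilt <-].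
by apply/esym/pick_x; rewrite mem_iota.
Qed.

End PeriodicSequence.

Section InvariantMeasure.
Variables (G : groupType) (A : finType) (X : set (G -> A)).
Local Open Scope group_scope.
Hypothesis Xinv : shift_invariant X.
Hypothesis dense : fixpts_dense X.
Variable z : pts X.
Hypothesis perz : periodic (proj1_sig z).

(* Shifts permute each finite orbit of the dense sequence, and every nonempty open
   set meets one of them. *)
Lemma invariant_measure_of_fixpts_dense (R : realType) : countable [set: G] ->
  exists mu : set (pts X) -> R,
    [/\ borel_probability mu, invariant_measure mu & full_support mu].
Proof.
move=> /(periodic_dense_seq dense perz)[q [q_periodic q_dense]].
pose orbit m : set {classic (pts X)} :=
  [set y | exists g, proj1_sig y = shift g (proj1_sig (q m))].
have finite_orbit m : finite_set (orbit m).
  apply: (finite_set_inj (f := fun y : pts X => proj1_sig y) _ _ (q_periodic m)).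
    by move=> a b _ _; apply: pts_inj.
  by move=> y [g ->]; exists g.
have orbit_q m : orbit m (q m) by exists 1; rewrite shift1.
pose shift_pts g (y : pts X) : pts X :=
  exist _ (shift g (proj1_sig y)) (Xinv g (proj2_sig y)).
exists (mixture R orbit); split.
- split; first exact: mixture0.
  + by move=> B _; apply: (mixture_ge0 R finite_orbit orbit_q).
  + by move=> F _ tF; apply: (mixture_sigma_additive finite_orbit orbit_q tF).
  + exact: (mixtureT R finite_orbit orbit_q).
- move=> g B _; apply: (@mixture_bij R _ orbit B _ (shift_pts g)) => m; split.
  + move=> y [[h yE] By]; split; last by exists y.
    by exists (g * h); rewrite /= yE shiftM.
  + move=> a b _ _ /(congr1 (@proj1_sig _ _)) /= ab.
    by apply: pts_inj; rewrite -(shiftK g (proj1_sig a)) ab shiftK.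
  + move=> y [[h yE] [x Bx yx]]; exists x; last by apply: pts_inj; rewrite /= yx.
    by split=> //; exists (g^-1 * h); rewrite -shiftM -yE yx shiftK.
- move=> U U_open [x Ux]; have [F [finF FU]] := U_open x Ux.
  have [m xq] := q_dense x F finF.
  exact: (mixture_gt0 R finite_orbit orbit_q (FU (q m) xq)).
Qed.

End InvariantMeasure.

Theorem corollary1p2 (R : realType) (G : groupType) (A : finType)
  (X : set (G -> A)) :
  residually_finite G ->
  subshift X -> finite_type X -> strongly_irreducible X ->
  (exists x, X x /\ periodic x) ->
  [/\ surjunctive X, Aut_residually_finite X &
      (countable [set: G] ->
        exists mu : set (pts X) -> R,
          [/\ borel_probability mu, invariant_measure mu & full_support mu])].
Proof.
move=> rf [Xclosed Xinv] [Om [P [finOm XE]]] [Delta [finDelta SI]] [z [Xz perz]].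
have dense : fixpts_dense X.
  exact: (strongly_irreducible_fixpts_dense finOm XE finDelta SI rf Xz perz).
split; first exact: surjunctive_of_fixpts_dense.
  exact: aut_residually_finite_of_fixpts_dense.
exact: (@invariant_measure_of_fixpts_dense _ _ _ Xinv dense (exist _ z Xz) perz R).
Qed.
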